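(* Let $\beta\in(0,\tfrac12)$ and let $\lambda$ be an eigenvalue of $\Delta_\beta$. Then $\lambda\ge\lambda_1(\beta)$.
   Context: Tree: for an integer $m\ge2$, $\mathbb{T}_m$ has vertices the root $\emptyset$ and all finite sequences $(\emptyset,a_1,\dots,a_k)$, $a_i\in\{0,\dots,m-1\}$; $|x|$ is the level, successors of $x$ are $(x,i)$, $\hat x$ is the immediate predecessor of $x\ne\emptyset$. A branch is an infinite sequence $(x_n)_{n\ge0}$ with $x_0=\emptyset$, $x_{n+1}$ a successor of $x_n$; $\lim_{x\to y}u(x)=\lim_n u(x_n)$ for a branch $y=(x_n)$. Operator: $p_\beta=\beta/(1-\beta)$ for $\beta\in(0,1)$. $\Delta_\beta u(\emptyset)=\frac1m\sum_{i=0}^{m-1}u(\emptyset,i)-u(\emptyset)$ and, for $x\ne\emptyset$, $\Delta_\beta u(x)=\big(\beta u(\hat x)+\frac{1-\beta}{m}\sum_{i=0}^{m-1}u(x,i)-u(x)\big)p_\beta^{-|x|}$. Eigenvalues: $\lambda\in\mathbb{R}$ is an eigenvalue of $\Delta_\beta$ if there is a bounded $u\not\equiv0$ with $-\Delta_\beta u=\lambda u$ on $\mathbb{T}_m$ and $\lim_{x\to y}u(x)=0$ for every branch $y$. $\mathcal{A}_\beta=\{\lambda>0:\exists v:\mathbb{T}_m\to\mathbb{R}\text{ and constants }0<c<C\text{ with } c<v<C \text{ and } \Delta_\beta v+\lambda v\le0 \text{ on }\mathbb{T}_m\}$, $\lambda_1(\beta)=\sup\mathcal{A}_\beta$. *)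

From HB Require Import structures.
From mathcomp Require Import all_boot all_order all_algebra.
From mathcomp Require Import all_classical all_reals all_analysis.
Set Implicit Arguments. Unset Strict Implicit. Unset Printing Implicit Defensive.
Import Order.TTheory GRing.Theory Num.Theory.
Import numFieldNormedType.Exports.
Local Open Scope ring_scope.
Local Open Scope classical_set_scope.

(* Vertices of T_m: finite sequences of digits in {0,...,m-1}; the root is [::],
   the successors of x are (rcons x i), the level |x| is (size x), and the
   immediate predecessor of a nonempty x is (take (size x).-1 x). *)
Definition vertex (m : nat) := seq 'I_m.

Definition pred_vertex (m : nat) (x : vertex m) : vertex m := take (size x).-1 x.

Definition pbeta {R : realType} (beta : R) : R := beta / (1 - beta).

Definition Delta {R : realType} (m : nat) (beta : R) (u : vertex m -> R)
  (x : vertex m) : R :=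
  if x is [::] then (m%:R)^-1 * (\sum_(i < m) u (rcons x i)) - u x
  else (beta * u (pred_vertex x) + (1 - beta) / m%:R * (\sum_(i < m) u (rcons x i))
        - u x) * (pbeta beta) ^- (size x).

(* A branch is determined by its digit sequence b : nat -> 'I_m; its n-th vertex
   is x_n = mkseq b n = [:: b 0; ...; b (n-1)] (so x_0 = root and
   x_{n+1} = rcons x_n (b n) is a successor of x_n). *)
Definition is_eigenvalue {R : realType} (m : nat) (beta lam : R) : Prop :=
  exists u : vertex m -> R,
    [/\ (exists M : R, forall x, `|u x| <= M),
        (exists x, u x != 0),
        (forall x, - Delta beta u x = lam * u x) &
        (forall b : nat -> 'I_m, (fun n => u (mkseq b n)) @ \oo --> (0 : R))].

Definition A_beta {R : realType} (m : nat) (beta : R) : set R :=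
  [set lam | 0 < lam /\
     exists (v : vertex m -> R) (c C : R),
       [/\ 0 < c, c < C, (forall x, c < v x /\ v x < C) &
           (forall x, Delta beta v x + lam * v x <= 0)]].

(* lambda_1(beta) = sup A_beta, taken in the extended reals so that no
   convention for empty/unbounded sets is silently imposed. *)
Definition lambda1 {R : realType} (m : nat) (beta : R) : \bar R :=
  ereal_sup [set l%:E | l in A_beta m beta].

From HB Require Import structures.
From mathcomp Require Import all_boot all_order all_algebra.
From mathcomp Require Import all_classical all_reals all_analysis.
From mathcomp Require Import ring lra.
Set Implicit Arguments. Unset Strict Implicit. Unset Printing Implicit Defensive.
Import Order.TTheory GRing.Theory Num.Theory numFieldNormedType.Exports.
Local Open Scope ring_scope.
Local Open Scope classical_set_scope.

(* Suppose lam < l for some l in A_beta, witnessed by v with c < v < C and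
   Delta v + l v <= 0.  Normalise the eigenfunction f to be positive somewhere
   and let t be the least multiple with f <= t v.  Then h = t v - f >= 0 gets
   arbitrarily close to 0, and where h is small,
   Delta h <= - t (l - lam) v + |lam| h < 0.  A negative Laplacian forces a
   strictly smaller neighbour, so starting from a near-contact point, climbing
   to a suitable ancestor and then descending, one finds a branch along which h
   stays small.  Since f -> 0 along every branch, h >= t c / 2 eventually on it:
   a contradiction. *)

Section TreeLaplacian.
Variables (R : realType) (m : nat) (beta : R).

Lemma DeltaZ (a : R) (g : vertex m -> R) x :
  Delta beta (fun y => a * g y) x = a * Delta beta g x.
Proof. by rewrite /Delta; case: x => [|z s] /=; rewrite -!mulr_sumr; ring. Qed.

Lemma DeltaB (g k : vertex m -> R) x :
  Delta beta (fun y => g y - k y) x = Delta beta g x - Delta beta k x.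
Proof. by rewrite /Delta; case: x => [|z s] /=; rewrite sumrB; ring. Qed.

Lemma DeltaN (g : vertex m -> R) x :
  Delta beta (fun y => - g y) x = - Delta beta g x.
Proof. by rewrite /Delta; case: x => [|z s] /=; rewrite sumrN; ring. Qed.

Hypotheses (m_gt0 : (0 < m)%N) (beta_gt0 : 0 < beta) (beta_lt1 : beta < 1).

Lemma Delta_lt0_smaller_neighbor (h : vertex m -> R) x :
  Delta beta h x < 0 ->
  (x != [::] /\ h (pred_vertex x) < h x) \/ exists i, h (rcons x i) < h x.
Proof.
move=> Dh_lt0.
have [|children_ge] := pselect (exists i, h (rcons x i) < h x); first by right.
have sum_ge : m%:R * h x <= \sum_(i < m) h (rcons x i).
  rewrite -[in X in X * _](card_ord m) mulr_natl -sumr_const.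
  by apply: ler_sum => i _; rewrite leNgt; apply/negP => ?; apply: children_ge; exists i.
have m_pos : 0 < (m%:R : R) by rewrite ltr0n.
have mean_ge : h x <= (m%:R)^-1 * \sum_(i < m) h (rcons x i) by rewrite ler_pdivlMl.
move: Dh_lt0; rewrite /Delta; case: x sum_ge mean_ge {children_ge} => [|z s] _ mean_ge /=.
  by rewrite subr_lt0 ltNge mean_ge.
have pbeta_pos : 0 < pbeta beta ^- (size s).+1.
  by rewrite invr_gt0 exprn_gt0 // divr_gt0 // subr_gt0.
rewrite pmulr_llt0 // => Dh_lt0; left; split => //.
rewrite ltNge; apply/negP => parent_ge.
have : (1 - beta) * h (z :: s) <= (1 - beta) / m%:R * \sum_(i < m) h (rcons (z :: s) i).
  by rewrite -mulrA; apply: ler_wpM2l => //; rewrite subr_ge0 ltW.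
have : beta * h (z :: s) <= beta * h (pred_vertex (z :: s)) by apply: ler_wpM2l => //; exact: ltW.
by move: Dh_lt0; set S := _ / _ * _; set P := h (pred_vertex _); lra.
Qed.

Lemma exists_ancestor_le_parent (h : vertex m -> R) x :
  exists y, h y <= h x /\ (y = [::] \/ h y <= h (pred_vertex y)).
Proof.
elim: {x}(size x) {-2}x (leqnn (size x)) => [|n IH] [|z s] size_x;
  try by exists [::]; split => //; left.
have [parent_ge|parent_lt] := leP (h (z :: s)) (h (pred_vertex (z :: s))).
  by exists (z :: s); split => //; right.
have [|y [hy y_min]] := IH (pred_vertex (z :: s)).
  by rewrite size_take /= ltnSn.
by exists y; split => //; apply: le_trans hy (ltW parent_lt).
Qed.

Lemma exists_branch (P : vertex m -> Prop) y :
  P y -> (forall x, P x -> exists i, P (rcons x i)) ->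
  exists b : nat -> 'I_m, forall n, P (mkseq b (size y + n)).
Proof.
move=> Py step; have [i0 _] := step y Py.
have [next Pnext] : {next : vertex m -> 'I_m &
    forall x, P x -> P (rcons x (next x))}.
  apply: (@boolp.choice _ _ (fun x i => P x -> P (rcons x i))) => x.
  have [/step [i] Pi|nPx] := pselect (P x); first by exists i.
  by exists i0 => /nPx.
pose X n := iter n (fun x => rcons x (next x)) y.
have size_X n : size (X n) = (size y + n)%N.
  by elim: n => [|n IH]; rewrite ?addn0 //= size_rcons IH addnS.
have nth_X n d k : (k < size (X n))%N -> nth i0 (X (n + d)%N) k = nth i0 (X n) k.
  move=> lt_k; elim: d => [|d IH]; first by rewrite addn0.
  rewrite addnS /= nth_rcons size_X -IH ifT //.
  by apply: leq_trans lt_k _; rewrite size_X leq_add2l leq_addr.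
exists (fun k => nth i0 (X k.+1) k) => n.
have -> : mkseq (fun k => nth i0 (X k.+1) k) (size y + n) = X n.
  apply: (@eq_from_nth _ i0); first by rewrite size_mkseq size_X.
  move=> k; rewrite size_mkseq => lt_k; rewrite nth_mkseq //.
  have [le_kn|lt_nk] := leqP k.+1 n.
    by rewrite -(subnKC le_kn) nth_X // size_X leq_addl.
  by rewrite -(subnKC (ltnW lt_nk)) nth_X // size_X.
by elim: n => //= n IH; apply: Pnext.
Qed.

Lemma Delta_lt0_sublevel_branch (h : vertex m -> R) theta x0 :
  (forall x, h x < theta -> Delta beta h x < 0) -> h x0 < theta ->
  exists b : nat -> 'I_m, exists N, forall n, (N <= n)%N -> h (mkseq b n) < theta.
Proof.
move=> Dh_lt0 hx0.
(* Along vertices of the sublevel set that are not below their parent, a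
   negative Laplacian forces a strictly smaller child. *)
pose P x := h x < theta /\ (x = [::] \/ h x <= h (pred_vertex x)).
have [y [hy y_min]] := exists_ancestor_le_parent h x0.
have Py : P y by split => //; apply: le_lt_trans hy hx0.
have step x : P x -> exists i, P (rcons x i).
  move=> [hx x_min]; have [[x_ne parent_lt]|[i child_lt]] :=
    Delta_lt0_smaller_neighbor (Dh_lt0 x hx).
    by case: x_min => [x0E|]; [rewrite x0E in x_ne | rewrite leNgt parent_lt].
  exists i; split; first exact: lt_trans hx.
  by right; rewrite /pred_vertex size_rcons -cats1 take_size_cat // cats1 ltW.
have [b Pb] := exists_branch Py step.
exists b, (size y) => n le_yn; rewrite -(subnKC le_yn).
by case: (Pb (n - size y)%N).
Qed.

End TreeLaplacian.

Lemma exists_tight_multiple {R : realType} {T : Type} (f v : T -> R) (c C M : R) x1 :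
  0 < c -> (forall x, c < v x /\ v x < C) -> (forall x, f x <= M) -> 0 < f x1 ->
  exists2 t, 0 < t & (forall x, f x <= t * v x) /\
    (forall e, 0 < e -> exists x, t * v x - f x < e).
Proof.
move=> c_gt0 v_bounds f_le fx1_gt0.
have v_gt0 x : 0 < v x by case: (v_bounds x) => /(lt_trans c_gt0).
have C_gt0 : 0 < C by case: (v_bounds x1) => /(lt_trans c_gt0) /lt_trans; apply.
pose E := [set f x / v x | x in [set: T]].
have E_sup : has_sup E.
  split; first by exists (f x1 / v x1), x1.
  exists (M / c) => _ [x _ <-]; rewrite ler_pdivrMr //.
  have M_ge0 : 0 <= M / c by rewrite divr_ge0 ?(le_trans (ltW fx1_gt0) (f_le x1)) ?ltW.
  apply: le_trans (f_le x) _; rewrite -[leLHS](divfK (lt0r_neq0 c_gt0)).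
  by apply: ler_wpM2l => //; case: (v_bounds x) => /ltW.
have ratio_le x : f x / v x <= sup E by apply: sup_upper_bound => //; exists x.
exists (sup E).
  by apply: lt_le_trans (ratio_le x1); rewrite divr_gt0.
split=> [x|e e_gt0]; first by rewrite -ler_pdivrMr.
have [_ [x _ <-] ratio_gt] := sup_adherent (divr_gt0 e_gt0 C_gt0) E_sup.
exists x; have [_ vx_lt] := v_bounds x.
have -> : sup E * v x - f x = v x * (sup E - f x / v x).
  by rewrite mulrBr mulrCA mulfV ?gt_eqF // mulr1 mulrC.
apply: (@lt_le_trans _ _ (v x * (e / C))); first by rewrite ltr_pM2l //; lra.
by rewrite mulrCA ger_pMr // ler_pdivrMr // mul1r ltW.
Qed.

Section SupersolutionComparison.
Variables (R : realType) (m : nat) (beta lam l c C : R) (f v : vertex m -> R).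
Hypotheses (m_gt0 : (0 < m)%N) (beta_gt0 : 0 < beta) (beta_lt1 : beta < 1).
Hypotheses (f_eigen : forall x, - Delta beta f x = lam * f x)
  (f_vanish : forall b : nat -> 'I_m, (fun n => f (mkseq b n)) @ \oo --> (0 : R)).
Hypotheses (c_gt0 : 0 < c) (v_bounds : forall x, c < v x /\ v x < C)
  (v_super : forall x, Delta beta v x + l * v x <= 0).

Lemma Delta_lt0_near_contact t : 0 < t -> lam < l -> (forall x, f x <= t * v x) ->
  exists2 eta, 0 < eta &
    forall x, t * v x - f x < eta -> Delta beta (fun y => t * v y - f y) x < 0.
Proof.
move=> t_gt0 lam_lt_l f_le.
pose gap := t * (l - lam) * c.
have gap_gt0 : 0 < gap by rewrite !mulr_gt0 // subr_gt0.
exists (gap / (`|lam| + 1)) => [|x hx]; first by rewrite divr_gt0 // ltr_wpDl.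
have [vx_gt _] := v_bounds x; have hx_ge0 : 0 <= t * v x - f x by rewrite subr_ge0.
have lam_h : `|lam| * (t * v x - f x) < gap.
  by rewrite ltr_pdivlMr ?ltr_wpDl // in hx; nra.
have lam_h_ge : - lam * (t * v x - f x) <= `|lam| * (t * v x - f x).
  by apply: ler_wpM2r => //; rewrite -normrN ler_norm.
have gap_lt : gap < t * (l - lam) * v x by rewrite ltr_pM2l // mulr_gt0 // subr_gt0.
have tv_super : t * Delta beta v x <= - (t * l * v x).
  by rewrite -mulrA -mulrN ler_pM2l //; have := v_super x; lra.
rewrite DeltaB DeltaZ -[Delta beta f x]opprK f_eigen.
by move: lam_h lam_h_ge gap_lt tv_super; rewrite /gap; nra.
Qed.

Lemma supersolution_le_eigenvalue M x1 :
  (forall x, f x <= M) -> 0 < f x1 -> l <= lam.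
Proof.
move=> f_le fx1_gt0; rewrite leNgt; apply/negP => lam_lt_l.
have [t t_gt0 [f_le_tv tight]] := exists_tight_multiple c_gt0 v_bounds f_le fx1_gt0.
have [eta eta_gt0 Dh_lt0] := Delta_lt0_near_contact t_gt0 lam_lt_l f_le_tv.
pose theta := Num.min eta (t * c / 2).
have tc2_gt0 : 0 < t * c / 2 by rewrite !mulr_gt0.
have theta_le_eta : theta <= eta by rewrite ge_min lexx.
have theta_le_tc2 : theta <= t * c / 2 by rewrite ge_min lexx orbT.
have [x0 hx0] : exists x, t * v x - f x < theta by apply: tight; rewrite lt_min eta_gt0.
have [b [N hb]] := Delta_lt0_sublevel_branch m_gt0 beta_gt0 beta_lt1
  (fun x hx => Dh_lt0 x (lt_le_trans hx theta_le_eta)) hx0.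
have [N' _ fb_small] := cvgr0_norm_lt _ (f_vanish b) _ tc2_gt0.
have := hb _ (leq_maxl N N'); have := fb_small _ (leq_maxr N N') => /=.
set y := mkseq b _; have [vy_gt _] := v_bounds y.
have : t * c <= t * v y by rewrite ler_pM2l // ltW.
have : f y <= `|f y| by exact: ler_norm.
lra.
Qed.

End SupersolutionComparison.

Lemma is_eigenvalue_pos (R : realType) (m : nat) (beta lam : R) :
  is_eigenvalue m beta lam ->
  exists f : vertex m -> R,
    [/\ (exists M, forall x, f x <= M), (exists x, 0 < f x),
        (forall x, - Delta beta f x = lam * f x) &
        (forall b : nat -> 'I_m, (fun n => f (mkseq b n)) @ \oo --> (0 : R))].
Proof.
move=> [u [[M u_le] [x1 ux1_neq0] u_eigen u_vanish]].
have [[y uy_gt0]|u_le0] := pselect (exists y, 0 < u y).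
  exists u; split => //; last by exists y.
  by exists M => x; exact: le_trans (ler_norm _) (u_le x).
exists (fun x => - u x); split.
- by exists M => x; apply: le_trans (ler_norm _) _; rewrite normrN.
- exists x1; rewrite oppr_gt0 lt_neqAle ux1_neq0 leNgt /=.
  by apply/negP => ux1_gt0; apply: u_le0; exists x1.
- by move=> x; rewrite DeltaN opprK mulrN -u_eigen opprK.
- by move=> b; rewrite -oppr0; apply: cvgN.
Qed.

Theorem corollary5p3 (R : realType) (m : nat) (beta lam : R) :
  (2 <= m)%N -> 0 < beta -> beta < 1 / 2 ->
  is_eigenvalue m beta lam -> (lambda1 m beta <= lam%:E)%E.
Proof.
move=> two_le_m beta_gt0 beta_lt_half /is_eigenvalue_pos
  [f [[M f_le] [x1 fx1_gt0] f_eigen f_vanish]].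
apply: ge_ereal_sup => _ [l [_ [v [c [C [c_gt0 _ v_bounds v_super]]]]] <-].
have m_gt0 : (0 < m)%N by apply: leq_trans two_le_m.
have beta_lt1 : beta < 1 by apply: lt_trans beta_lt_half _; rewrite ltr_pdivrMr // mul1r ltr1n.
rewrite lee_fin; exact: (supersolution_le_eigenvalue m_gt0 beta_gt0 beta_lt1 f_eigen
  f_vanish c_gt0 v_bounds v_super f_le fx1_gt0).
Qed.
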